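(* For every integer $r>0$ and every integer $n\ge 1$, \[B_{n-1,r}\,B_{n+1,r}\ge B_{n,r}^2.\]
   Context: For integers $n\ge k\ge r\ge 0$, the $r$-Stirling number of the second kind $\genfrac\{\}{0pt}{}{n}{k}_r$ is the number of partitions of the set $\{1,2,\dots,n\}$ into $k$ nonempty, pairwise disjoint subsets such that the elements $1,\dots,r$ lie in distinct subsets (it is taken to be $0$ when $k>n$). The $r$-Bell numbers are $B_{n,r}=\sum_{k=0}^n\genfrac\{\}{0pt}{}{n+r}{k+r}_r$, i.e. the number of partitions of a set of $n+r$ elements in which $r$ specified elements lie in distinct blocks. *)

From mathcomp Require Import all_boot.
Set Implicit Arguments. Unset Strict Implicit. Unset Printing Implicit Defensive.

(* r-Stirling number of the second kind {n k}_r : the number of partitions of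
   {1..n} (here 'I_n = {0..n-1}) into k nonempty pairwise disjoint blocks such that
   the first r elements lie in distinct blocks. *)
Definition rstirling2 (r n k : nat) : nat :=
  #|[set P : {set {set 'I_n}} |
      [&& partition P [set: 'I_n], #|P| == k &
          [forall i : 'I_n, forall j : 'I_n,
             [&& (i < r)%N, (j < r)%N & i != j] ==> (pblock P i != pblock P j)]]]|.

Definition rbell (n r : nat) : nat := \sum_(0 <= k < n.+1) rstirling2 r (n + r) (k + r).

From mathcomp Require Import all_boot all_order all_algebra.
From mathcomp Require Import ring.
Set Implicit Arguments. Unset Strict Implicit. Unset Printing Implicit Defensive.

Import Order.TTheory GRing.Theory Num.Theory.

(* For m <= d the r-Bell numbers obey a finite Dobinski formula
     B_{m,r} = sum_(j <= d) w_j (j + r)^m,   w_j = (sum_(i <= d - j) (-1)^i / i!) / j! >= 0,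
   which follows from the falling-factorial expansion
     (x + r)^m = sum_k {m + r, k + r}_r x (x - 1) ... (x - k + 1)
   and from sum_j w_j j (j - 1) ... (j - k + 1) = 1 for k <= d.  So B_{0,r}, ..., B_{d,r} are
   the moments of a nonnegative measure, and moments are log-convex by Cauchy-Schwarz.
   The expansion rests on the triangular recurrence of {n, k}_r, obtained by removing an
   element x outside the r distinguished ones: x either forms a block of its own or joins
   one of the blocks of the remaining elements. *)

Lemma setD1_id (T : finType) (x : T) (A : {set T}) : x \notin A -> A :\ x = A.
Proof. by move=> xA; apply/setDidPl; rewrite disjoint_sym disjoints1. Qed.

Lemma card_pairs_dep (A B : finType) (F : A -> {set B}) :
  #|[set u : A * B | u.2 \in F u.1]| = \sum_a #|F a|.
Proof.
rewrite -sum1dep_card -(pair_big_dep xpredT (fun a b => b \in F a) (fun _ _ => 1)).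
by apply: eq_bigr => a _; rewrite sum1_card.
Qed.

Section SeparatingPartitions.
Variable T : finType.
Implicit Types (S D B C : {set T}) (P Q : {set {set T}}).

Definition separates S P := [forall B in P, #|S :&: B| <= 1].

Definition spartition S D k P := [&& partition P D, #|P| == k & separates S P].

Lemma separatesP S P :
  reflect {in P, forall B, {in S :&: B &, forall i j, i = j}} (separates S P).
Proof.
apply: (iffP forall_inP) => sepP B BP.
  by move=> i j iB jB; apply: (card_le1_eqP (sepP B BP) j i).
by apply/card_le1_eqP => i j iB jB; apply: sepP BP j i jB iB.
Qed.

Lemma separates_pblockE S P D : partition P D -> S \subset D ->
  [forall i, forall j, [&& i \in S, j \in S & i != j] ==> (pblock P i != pblock P j)]
  = separates S P.
Proof.
move=> partP sSD; have tP := partition_trivIset partP.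
have SP i : i \in S -> i \in cover P by rewrite (cover_partition partP) => /(subsetP sSD).
apply/forallP/separatesP => [sepP B BP i j | sepP i].
  rewrite !inE => /andP[iS iB] /andP[jS jB]; apply/eqP; apply: contraT => ij.
  move: (sepP i) => /forallP/(_ j); rewrite iS jS ij /=.
  by rewrite (def_pblock tP BP iB) (def_pblock tP BP jB) eqxx.
apply/forallP => j; apply/implyP => /and3P[iS jS]; apply: contra => /eqP eqij.
have iB : i \in S :&: pblock P i by rewrite !inE iS mem_pblock SP.
have jB : j \in S :&: pblock P i by rewrite !inE jS eqij mem_pblock SP.
by rewrite (sepP _ (pblock_mem (SP i iS)) _ _ iB jB).
Qed.

Lemma partition_singletons S : partition [set [set i] | i in S] S.
Proof.
have [tP _] : trivIset [set [set i] | i in S] /\ {in S &, injective set1}.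
  apply: trivIimset => [i j _ _ ji | ]; first by rewrite disjoints1 inE eq_sym.
  by apply/imsetP => -[i _ /setP/(_ i)]; rewrite !inE eqxx.
rewrite /partition tP cover_imset; apply/and3P; split => //.
  apply/eqP/setP => y; apply/bigcupP/idP => [[i iS /set1P->] // | yS].
  by exists y; rewrite ?set11.
by apply/imsetP => -[i _ /setP/(_ i)]; rewrite !inE eqxx.
Qed.

Lemma spartition_selfE S k P : spartition S S k P -> P = [set [set i] | i in S].
Proof.
case/and3P=> partP _ /forall_inP sepP.
have single B : B \in P -> exists2 i, i \in S & B = [set i].
  move=> BP; have BS := partitionS partP BP; have /set0Pn[i iB] := partition_neq0 partP BP.
  exists i; first exact: subsetP BS i iB.
  apply/eqP; rewrite eq_sym eqEcard sub1set iB cards1.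
  by rewrite -(setIidPr BS) sepP.
apply/setP => B; apply/idP/imsetP => [/single[i iS ->] | [i iS ->]]; first by exists i.
have iP : i \in cover P by rewrite (cover_partition partP).
have [j _ Bj] := single _ (pblock_mem iP).
by move: (mem_pblock P i); rewrite iP Bj => /set1P ->; rewrite -Bj pblock_mem.
Qed.

Lemma card_spartition_self S k : #|[set P | spartition S S k P]| = (k == #|S|).
Proof.
have cardS : #|[set [set i] | i in S]| = #|S|.
  by apply: card_in_imset => i j _ _; apply: set1_inj.
case: eqVneq => [-> | neq].
  apply/eqP/cards1P; exists [set [set i] | i in S]; apply/setP => P; rewrite !inE.
  apply/idP/eqP => [/spartition_selfE // | ->].
  rewrite /spartition partition_singletons cardS eqxx.
  apply/forall_inP => _ /imsetP[i _ ->].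
  by rewrite -(cards1 i) subset_leq_card ?subsetIr.
apply/eqP; rewrite cards_eq0; apply/eqP/setP => P; rewrite !inE.
apply: contraNF neq => spP; have /and3P[_ /eqP <- _] := spP.
by rewrite (spartition_selfE spP) cardS.
Qed.

Section PointRemoval.
Variables (S D : {set T}) (x : T).
Hypotheses (xD : x \in D) (xNS : x \notin S).

(* A partition of [D] is encoded by the partition [Q] it induces on [D :\ x] and the
   block [B] of [Q] that [x] joins, with [B = set0] when [[set x]] is a block. *)
Definition detach P : {set {set T}} * {set T} :=
  let C := pblock P x in (if C :\ x == set0 then P :\ C else C :\ x |: P :\ C, C :\ x).

Definition attach (QB : {set {set T}} * {set T}) := (x |: QB.2) |: (QB.1 :\ QB.2).

Lemma attach_partition Q B : partition Q (D :\ x) -> (B \in Q) || (B == set0) ->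
  partition (attach (Q, B)) D.
Proof.
move=> partQ BQ; have BDx : B \subset D :\ x.
  by case/orP: BQ => [/(partitionS partQ) | /eqP->] //; apply: sub0set.
have partQB : partition (Q :\ B) ((D :\ x) :\: B).
  case/orP: BQ => [BQ | /eqP->]; first exact: partitionD1.
  by rewrite setD0 (@setD1_id _ _ Q) ?(partition0 partQ).
have xB0 : x |: B != set0 by apply/set0Pn; exists x; apply: setU11.
have disjB : [disjoint x |: B & (D :\ x) :\: B].
  rewrite -setI_eq0; apply/eqP/setP => y; rewrite !inE.
  by case: (y \in B); case: (y == x).
have := partitionU1 partQB xB0 disjB; congr partition; apply/setP => y.
rewrite !inE; case: eqVneq => [-> | yx] //=.
by case: (boolP (y \in B)) => //= /(subsetP BDx); rewrite !inE => /andP[_ ->].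
Qed.

Lemma setU1_notin_partition Q B : partition Q (D :\ x) -> x |: B \notin Q.
Proof.
move=> partQ; apply/negP => /(partitionS partQ)/subsetP/(_ x (setU11 x B)).
by rewrite !inE eqxx.
Qed.

Lemma attach_card Q B : partition Q (D :\ x) -> #|attach (Q, B)| = #|Q :\ B|.+1.
Proof.
move=> partQ; rewrite /attach /= cardsU1 inE negb_and.
by rewrite (setU1_notin_partition B partQ) orbT.
Qed.

Lemma attach_separates Q B : separates S Q -> (B \in Q) || (B == set0) ->
  separates S (attach (Q, B)).
Proof.
move=> /forall_inP sepQ BQ; apply/forall_inP => C; rewrite !inE.
case/orP => [/eqP-> | /andP[_ /sepQ] //].
have -> : S :&: (x |: B) = S :&: B.
  by apply/setP => y; rewrite !inE; case: eqVneq => [->|] //=; rewrite (negbTE xNS).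
by case/orP: BQ => [/sepQ // | /eqP->]; rewrite setI0 cards0.
Qed.

Section Detach.
Variable P : {set {set T}}.
Hypothesis partP : partition P D.
Let C := pblock P x.

Let CP : C \in P.
Proof. by apply: pblock_mem; rewrite (cover_partition partP). Qed.

Let xC : x \in C.
Proof. by rewrite mem_pblock (cover_partition partP). Qed.

Lemma pblockD1_notin : C :\ x \notin P.
Proof.
apply/negP => CxP; have /set0Pn[y yCx] := partition_neq0 partP CxP.
have tP := partition_trivIset partP; have := def_pblock tP CxP yCx.
rewrite (def_pblock tP CP (subsetP (subsetDl C [set x]) y yCx)) => /setP/(_ x).
by rewrite xC !inE eqxx.
Qed.

Lemma detach_partition : partition (detach P).1 (D :\ x).
Proof.
have partPC := partitionD1 partP CP; rewrite /detach -/C.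
have CD := partitionS partP CP.
case: ifPn => [/eqP Cx0 | Cx0].
  have Cx : C = [set x] by rewrite -(setD1K xC) Cx0 setU0.
  by move: partPC; rewrite /= {2}Cx.
have -> : D :\ x = (C :\ x) :|: (D :\: C).
  apply/setP => y; rewrite !inE; case: (eqVneq y x) => [-> | _] /=; first by rewrite xC.
  by case: (boolP (y \in C)) => [/(subsetP CD) -> | _].
apply: partitionU1 => //; rewrite -setI_eq0; apply/eqP/setP => y.
by rewrite !inE; case: (y \in C); rewrite ?andbF.
Qed.

Lemma detach_card : #|(detach P).1| + ((detach P).2 == set0) = #|P|.
Proof.
rewrite (cardsD1 C P) CP /detach -/C /=; case: ifPn => _; first by rewrite addn1.
rewrite cardsU1 inE negb_and pblockD1_notin orbT.
by rewrite addn0 add1n.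
Qed.

Lemma detach_separates : separates S P -> separates S (detach P).1.
Proof.
move=> /forall_inP sepP; apply/forall_inP => B; rewrite /detach -/C /=.
have PCP B' : B' \in P :\ C -> #|S :&: B'| <= 1 by rewrite inE => /andP[_ /sepP].
case: ifPn => _; [exact: PCP | case/setU1P => [-> | /PCP //]].
exact: leq_trans (subset_leq_card (setIS S (subsetDl C [set x]))) (sepP C CP).
Qed.

Lemma attachK : attach (detach P) = P.
Proof.
rewrite /attach /detach -/C /= setD1K //; case: ifPn => [/eqP Cx0 | Cx0].
  by rewrite Cx0 setD1_id ?(partition0 (partitionD1 partP CP)) // setD1K.
by rewrite (@setU1K _ (C :\ x)) ?setD1K // inE negb_and pblockD1_notin orbT.
Qed.

End Detach.

Lemma detachK Q B : partition Q (D :\ x) -> (B \in Q) || (B == set0) ->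
  detach (attach (Q, B)) = (Q, B).
Proof.
move=> partQ BQ; have partA := attach_partition partQ BQ.
have xNB : x \notin B.
  case/orP: BQ => [BQ | /eqP->]; last by rewrite inE.
  by apply: contra (setU1_notin_partition B partQ) => xB; rewrite (setUidPr _) ?sub1set.
rewrite /detach (def_pblock (partition_trivIset partA) (setU11 _ _) (setU11 _ _)).
rewrite /attach /= setU1K // (@setU1K _ (x |: B)); last first.
  by rewrite inE negb_and (setU1_notin_partition B partQ) orbT.
case/orP: BQ => [BQ | /eqP->]; last by rewrite eqxx (@setD1_id _ _ Q) ?(partition0 partQ).
by rewrite (negbTE (partition_neq0 partQ BQ)) setD1K.
Qed.

Definition attach_sites k Q : {set {set T}} :=
  if spartition S (D :\ x) k.+1 Q then Q
  else if spartition S (D :\ x) k Q then [set set0] else set0.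

Lemma attach_sitesP k Q B : B \in attach_sites k Q ->
  [/\ partition Q (D :\ x), separates S Q, (B \in Q) || (B == set0) & #|Q :\ B| = k].
Proof.
rewrite /attach_sites /spartition.
case: ifP => [/and3P[partQ /eqP cardQ sepQ] BQ | _].
  by split; rewrite ?BQ //; move: (cardsD1 B Q); rewrite BQ cardQ => -[].
case: ifP => [/and3P[partQ /eqP cardQ sepQ] | _]; last by rewrite inE.
by rewrite inE => /eqP->; split; rewrite ?eqxx ?orbT // setD1_id ?(partition0 partQ).
Qed.

Lemma card_attach_sites k Q :
  #|attach_sites k Q| = spartition S (D :\ x) k.+1 Q * k.+1 + spartition S (D :\ x) k Q.
Proof.
rewrite /attach_sites; case: ifPn => [spQ | _]; last by case: ifP; rewrite ?cards1 ?cards0.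
have /and3P[_ /eqP cardQ _] := spQ.
by rewrite /spartition cardQ eqn_leq ltnn andbF /= addn0 mul1n.
Qed.

Lemma detach_sites k P : spartition S D k.+1 P ->
  (detach P).2 \in attach_sites k (detach P).1.
Proof.
case/and3P=> partP /eqP cardP sepP.
move: (detach_partition partP) (detach_separates partP sepP) (detach_card partP).
rewrite /detach /attach_sites /spartition cardP /=.
case: ifPn => [/eqP-> | _] -> -> /=.
  by rewrite addn1 => -[->]; rewrite eqn_leq ltnn andbF eqxx /= inE.
by rewrite /nat_of_bool addn0 => ->; rewrite eqxx setU11.
Qed.

Lemma card_spartitionS k : #|[set P | spartition S D k.+1 P]| =
  k.+1 * #|[set Q | spartition S (D :\ x) k.+1 Q]| + #|[set Q | spartition S (D :\ x) k Q]|.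
Proof.
set pairs := [set QB | QB.2 \in attach_sites k QB.1].
have -> : [set P | spartition S D k.+1 P] = attach @: pairs.
  apply/setP => P; rewrite inE; apply/idP/imsetP => [spP | [[Q B]]].
    have partP : partition P D by case/and3P: spP.
    by exists (detach P); rewrite ?inE ?detach_sites ?attachK.
  rewrite inE /= => /attach_sitesP[partQ sepQ BQ cardQB] ->.
  by rewrite /spartition attach_partition ?attach_card ?cardQB ?eqxx ?attach_separates.
rewrite card_in_imset; last first.
  move=> [Q1 B1] [Q2 B2]; rewrite !inE => /attach_sitesP[p1 _ b1 _] /attach_sitesP[p2 _ b2 _].
  by move=> eq12; rewrite -(detachK p1 b1) eq12 detachK.
rewrite card_pairs_dep; under eq_bigr => Q _ do rewrite card_attach_sites.
rewrite big_split /=.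
have sum_bool (b : pred {set {set T}}) : \sum_Q (b Q : nat) = #|[set Q | b Q]|.
  by rewrite -sum1dep_card [RHS]big_mkcond; apply: eq_bigr => Q _; case: (b Q).
by rewrite -big_distrl /= mulnC !sum_bool.
Qed.

End PointRemoval.

End SeparatingPartitions.

Fixpoint rstir (r m k : nat) : nat :=
  if m is m'.+1 then (if k is k'.+1 then k * rstir r m' k + rstir r m' k' else 0)
  else (k == r).

Lemma card_spartition (T : finType) (S D : {set T}) k : S \subset D ->
  #|[set P | spartition S D k P]| = rstir #|S| (#|D| - #|S|) k.
Proof.
move=> SD; move mE : (#|D| - #|S|) => m; elim: m D mE k SD => [|m IHm] D mE k SD.
  have -> : D = S by apply/eqP; rewrite eq_sym eqEcard SD -subn_eq0 mE.
  exact: card_spartition_self.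
have [x xD xNS] : exists2 x, x \in D & x \notin S.
  by apply/subsetPn; apply: contraTN isT => /subset_leq_card; rewrite -subn_eq0 mE.
have SDx : S \subset D :\ x.
  by apply/subsetP => y yS; rewrite !inE (subsetP SD) ?andbT //; apply: contraNneq xNS => <-.
have mEx : #|D :\ x| - #|S| = m.
  by move: mE; rewrite (cardsD1 x D) xD add1n subSn ?subset_leq_card // => -[].
case: k => [|k]; last by rewrite (card_spartitionS xD xNS) !IHm.
apply/eqP; rewrite cards_eq0; apply/eqP/setP => P; rewrite !inE.
apply/negP => /and3P[/cover_partition covP /eqP/cards0_eq P0 _].
by move: xD; rewrite -covP P0 /cover big_set0 inE.
Qed.

Lemma card_ord_ltn n r : r <= n -> #|[set i : 'I_n | i < r]| = r.
Proof.
move=> rn; have -> : [set i : 'I_n | i < r] = widen_ord rn @: [set: 'I_r].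
  apply/setP => i; rewrite inE; apply/idP/imsetP => [ir | [j _ ->]]; last exact: (ltn_ord j).
  by exists (Ordinal ir) => //; apply: val_inj.
rewrite card_imset ?cardsT ?card_ord //.
by move=> i j /(congr1 val) ij; apply: val_inj.
Qed.

Lemma rstirling2E r m k : rstirling2 r (m + r) k = rstir r m k.
Proof.
set S := [set i : 'I_(m + r) | i < r].
transitivity #|[set P | spartition S [set: 'I_(m + r)] k P]|.
  apply: eq_card => P; rewrite !inE /spartition.
  case partP: (partition P _) => //=; congr (_ && _).
  rewrite -(separates_pblockE partP (subsetT S)).
  by apply: eq_forallb => i; apply: eq_forallb => j; rewrite !inE.
by rewrite card_spartition ?subsetT // cardsT card_ord card_ord_ltn ?leq_addl // addnK.
Qed.

Lemma rstir_small r m k : k < r -> rstir r m k = 0.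
Proof.
elim: m k => [|m IHm] k kr /=; first by rewrite ltn_eqF.
by case: k kr => // k kr; rewrite !IHm ?muln0 // ltnW.
Qed.

Lemma rstir_large r m k : m + r < k -> rstir r m k = 0.
Proof.
elim: m k => [|m IHm] k mk /=; first by rewrite gtn_eqF.
by case: k mk => // k; rewrite addSn ltnS => mk; rewrite !IHm ?muln0 // ltnW.
Qed.

Lemma rstir_diag r m : rstir r m.+1 r = r * rstir r m r.
Proof. by case: r => [|r] //=; rewrite (@rstir_small r.+1 m r) ?addn0. Qed.

Lemma rbellE d m r : m <= d -> rbell m r = \sum_(k < d.+1) rstir r m (k + r).
Proof.
move=> md; rewrite /rbell big_mkord.
rewrite (big_ord_widen _ (fun k => rstirling2 r (m + r) (k + r)) (md : m < d.+1)) big_mkcond.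
apply: eq_bigr => k _; rewrite rstirling2E; case: ltnP => // mk.
by rewrite rstir_large // ltn_add2r.
Qed.

Lemma ffact_mul_addn x k r : x ^_ k * (x + r) = x ^_ k.+1 + (k + r) * x ^_ k.
Proof.
case: (leqP k x) => [kx | xk]; last by rewrite !ffact_small ?muln0 // ltnW.
by rewrite ffactnSr mulnC [_ * (x - k)]mulnC -mulnDl addnA subnK.
Qed.

Lemma expn_rstir_ffact d r m x : m <= d ->
  (x + r) ^ m = \sum_(k < d.+1) rstir r m (k + r) * x ^_ k.
Proof.
elim: m => [|m IHm] md.
  rewrite big_ord_recl /= eqxx mul1n big1 // => k _.
  by rewrite /bump /= -{2}[r]add0n eqn_add2r.
rewrite [RHS]big_ord_recl add0n rstir_diag.
under [X in _ = _ + X]eq_bigr => k _ do rewrite lift0 addSn /=.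
rewrite expnS IHm 1?ltnW // mulnC big_distrl /=.
under eq_bigr => k _ do rewrite -mulnA ffact_mul_addn mulnDr.
rewrite big_split /= big_ord_recr /= rstir_large ?mul0n ?addn0 ?ltn_add2r //.
rewrite big_ord_recl /= addnCA; congr (_ + _); first by rewrite add0n mulnCA mulnA.
rewrite -big_split /=; apply: eq_bigr => k _.
by rewrite /bump add1n addSn mulnDl mulnCA mulnA addnC.
Qed.

Section FiniteDobinski.
Local Open Scope ring_scope.
Variable R : numFieldType.

Definition exp_neg1_sum m : R := \sum_(i < m.+1) (-1) ^+ i / i`!%:R.

Definition dobinski_weight d j : R := exp_neg1_sum (d - j) / j`!%:R.

Lemma fact_neq0 n : n`!%:R != 0 :> R.
Proof. by rewrite pnatr_eq0 -lt0n fact_gt0. Qed.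

Lemma exp_neg1_sumS m : exp_neg1_sum m.+1 = exp_neg1_sum m + (-1) ^+ m.+1 / m.+1`!%:R.
Proof. by rewrite /exp_neg1_sum big_ord_recr. Qed.

Lemma exp_neg1_sum_ge0 m : 0 <= exp_neg1_sum m.
Proof.
suff: (if odd m then 0 else m`!%:R^-1) <= exp_neg1_sum m.
  by apply: le_trans; case: ifP; rewrite ?invr_ge0 ?ler0n.
elim: m => [|m IHm]; first by rewrite /exp_neg1_sum big_ord1 expr0 div1r.
rewrite exp_neg1_sumS -signr_odd /=.
case: (odd m) IHm => /= IHm; first by rewrite expr0 div1r lerDr.
have le_inv : m.+1`!%:R^-1 <= m`!%:R^-1 :> R.
  by rewrite lef_pV2 ?posrE ?ltr0n ?fact_gt0 // ler_nat factS leq_pmull.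
by rewrite expr1 mulN1r subr_ge0 (le_trans le_inv IHm).
Qed.

Lemma dobinski_weight_ge0 d j : 0 <= dobinski_weight d j.
Proof. by rewrite divr_ge0 ?exp_neg1_sum_ge0 ?ler0n. Qed.

Lemma sum_sign_binomial_fact n : (0 < n)%N ->
  \sum_(j < n.+1) (-1) ^+ (n - j) / ((n - j)`!%:R * j`!%:R) = 0 :> R.
Proof.
move=> n_gt0; have sum0 : (-1 + 1 : R) ^+ n = 0 by rewrite addNr expr0n gtn_eqF.
rewrite -[RHS](mulr0 (n`!%:R^-1)) -[X in _ * X]sum0 exprDn mulr_sumr.
apply: eq_bigr => j _; rewrite expr1n mulr1 -mulr_natr.
rewrite -(bin_fact (ltn_ord j : (j <= n)%N)) !natrM.
by field; rewrite !fact_neq0 pnatr_eq0 -lt0n bin_gt0 -ltnS ltn_ord.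
Qed.

Lemma sum_dobinski_weight d : \sum_(j < d.+1) dobinski_weight d j = 1.
Proof.
elim: d => [|d IHd].
  by rewrite big_ord1 /dobinski_weight /exp_neg1_sum big_ord1 expr0 !divr1.
have := sum_sign_binomial_fact (ltn0Sn d); rewrite big_ord_recr /= subnn => sum0.
have jd (j : 'I_d.+1) : (d.+1 - j = (d - j).+1)%N by rewrite subSn // -ltnS.
rewrite big_ord_recr /=.
under eq_bigr => j _ do rewrite /dobinski_weight jd exp_neg1_sumS mulrDl.
rewrite big_split /= IHd -addrA -[RHS]addr0; congr (_ + _).
apply: etrans sum0; congr (_ + _).
  by apply: eq_bigr => j _; rewrite jd invfM mulrA.
by rewrite /dobinski_weight subnn /exp_neg1_sum big_ord1 invfM mulrA.
Qed.

Lemma sum_dobinski_weight_ffact d k : (k <= d)%N ->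
  \sum_(j < d.+1) dobinski_weight d j * (j ^_ k)%:R = 1.
Proof.
elim: k d => [|k IHk] d kd.
  by rewrite -[RHS](sum_dobinski_weight d); apply: eq_bigr => j _; rewrite mulr1.
case: d kd => // d kd; rewrite big_ord_recl ffact0n mulr0 add0r -[RHS](IHk d kd).
apply: eq_bigr => j _; rewrite /dobinski_weight lift0 subSS ffactSS factS !natrM.
by field; rewrite fact_neq0 addrC natr1 pnatr_eq0.
Qed.

Lemma dobinski_rbell d m r : (m <= d)%N ->
  \sum_(j < d.+1) dobinski_weight d j * (j + r)%N%:R ^+ m = (rbell m r)%:R.
Proof.
move=> md; rewrite (rbellE r md) natr_sum.
under [X in X = _]eq_bigr => j _.
  by rewrite -natrX (expn_rstir_ffact r j md) natr_sum mulr_sumr; over.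
rewrite exchange_big /=; apply: eq_bigr => k _.
under eq_bigr => j _ do rewrite natrM mulrCA.
by rewrite -mulr_sumr sum_dobinski_weight_ffact ?mulr1 // -ltnS.
Qed.

End FiniteDobinski.

Section LogConvexMoments.
Local Open Scope ring_scope.
Variables (R : realFieldType) (I : finType) (w u : I -> R).
Hypotheses (w_ge0 : forall i, 0 <= w i) (u_ge0 : forall i, 0 <= u i).

Let moment m := \sum_i w i * u i ^+ m.

(* Lagrange's identity: twice [moment m * moment m.+2 - moment m.+1 ^+ 2] is the sum over
   all pairs (i, j) of [w i * w j * u i ^+ m * u j ^+ m * (u i - u j) ^+ 2]. *)
Lemma moment_log_convex m : moment m.+1 ^+ 2 <= moment m * moment m.+2.
Proof.
rewrite -subr_ge0.
pose X i j := w i * u i ^+ m.+2 * (w j * u j ^+ m) - w i * u i ^+ m.+1 * (w j * u j ^+ m.+1).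
have -> : moment m * moment m.+2 - moment m.+1 ^+ 2 = \sum_i \sum_j X i j.
  by rewrite mulrC expr2 !big_distrlr -sumrB; apply: eq_bigr => i _; rewrite -sumrB.
rewrite -(pmulr_rge0 _ (ltr0n R 2)) mulr2n mulrDl mul1r.
rewrite {2}exchange_big -big_split; apply: sumr_ge0 => i _.
rewrite -big_split; apply: sumr_ge0 => j _ /=.
have -> : X i j + X j i = w i * w j * (u i ^+ m * u j ^+ m) * (u i - u j) ^+ 2.
  by rewrite /X !exprS; ring.
by rewrite mulr_ge0 ?sqr_ge0 // !mulr_ge0 ?exprn_ge0.
Qed.

End LogConvexMoments.

Lemma rbell_log_convex m r : rbell m.+1 r ^ 2 <= rbell m r * rbell m.+2 r.
Proof.
rewrite -(ler_nat rat) natrM natrX -!(@dobinski_rbell _ m.+2) ?(ltnW (leqnSn m.+1)) //.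
apply: moment_log_convex => j; [exact: dobinski_weight_ge0 | exact: ler0n].
Qed.

Theorem mainTheorem6 (r n : nat) (hr : (0 < r)%N) (hn : (1 <= n)%N) :
  (rbell n r ^ 2 <= rbell n.-1 r * rbell n.+1 r)%N.
Proof. by case: n hn => // m _; apply: rbell_log_convex. Qed.
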